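(* Let $\mathcal{A}$ and $\mathcal{B}$ be hyperplane arrangements in a finite-dimensional $\mathbb{K}$-vector space $V$. Let $\varnothing\neq S\subseteq\mathcal{A}$ and $\varnothing\neq T\subseteq\mathcal{B}$ with $\langle S\rangle_{\mathcal{A}}=\mathcal{A}$ and $\langle T\rangle_{\mathcal{B}}=\mathcal{B}$. Suppose $\psi:L(\mathcal{A})\to L(\mathcal{B})$ is a poset isomorphism and $\varphi\in\mathrm{GL}(V)$ satisfy $\psi(S)=\varphi(S)=T$ and $\psi(H)=\varphi(H)$ for all $H\in S$. Then $\varphi(\mathcal{A})=\mathcal{B}$, i.e. $\{\varphi(H)\mid H\in\mathcal{A}\}=\mathcal{B}$.
   Context: For an arrangement $\mathcal{A}$, $L(\mathcal{A})$ is the set of all intersections of subsets of $\mathcal{A}$, ordered by reverse inclusion. For $\varnothing\neq S\subseteq\mathcal{A}$ set $\mathrm{Gen}_0(\mathcal{A},S):=S$ and inductively $\mathrm{Gen}_{i+1}(\mathcal{A},S):=\{H\in\mathcal{A}\mid \exists\, J\subseteq L(\mathrm{Gen}_i(\mathcal{A},S)) \text{ with } H=\sum_{X\in J}X\}$ (sum of subspaces). The subarrangement generated by $S$ is $\langle S\rangle_{\mathcal{A}}:=\bigcup_{i\ge0}\mathrm{Gen}_i(\mathcal{A},S)$; $S$ generates $\mathcal{A}$ if $\langle S\rangle_{\mathcal{A}}=\mathcal{A}$. *)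

From HB Require Import structures.
From mathcomp Require Import all_boot all_algebra.
From mathcomp Require Import finmap.
Set Implicit Arguments. Unset Strict Implicit. Unset Printing Implicit Defensive.
Import GRing.Theory.
Local Open Scope ring_scope.
Local Open Scope fset_scope.

Section Arr.
Variables (K : fieldType) (V : vectType K).

Definition is_hyperplane (H : {vspace V}) : Prop := (\dim H).+1 = \dim {:V}.

Definition is_arrangement (A : {fset {vspace V}}) : Prop :=
  forall H, H \in A -> is_hyperplane H.

Definition Lat (P : {vspace V} -> Prop) (X : {vspace V}) : Prop :=
  exists B : seq {vspace V}, (forall H, H \in B -> P H) /\ X = (\bigcap_(H <- B) H)%VS.

Definition LA (A : {fset {vspace V}}) : {vspace V} -> Prop := Lat (fun H => H \in A).

Fixpoint Gen (A S : {fset {vspace V}}) (i : nat) : {vspace V} -> Prop :=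
  match i with
  | 0 => fun H => H \in S
  | i'.+1 => fun H => H \in A /\
      exists J : seq {vspace V}, (forall X, X \in J -> Lat (Gen A S i') X)
                                 /\ H = (\sum_(X <- J) X)%VS
  end.

Definition generated (A S : {fset {vspace V}}) (H : {vspace V}) : Prop :=
  exists i, Gen A S i H.

Definition generates (A S : {fset {vspace V}}) : Prop :=
  forall H, generated A S H <-> H \in A.

Definition lattice_iso (A B : {fset {vspace V}}) (psi : {vspace V} -> {vspace V}) : Prop :=
  [/\ forall X, LA A X -> LA B (psi X),
      forall Y, LA B Y -> exists2 X, LA A X & psi X = Y,
      forall X Y, LA A X -> LA A Y -> ((psi Y <= psi X)%VS = (Y <= X)%VS) &
      forall X Y, LA A X -> LA A Y -> psi X = psi Y -> X = Y].

End Arr.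

From HB Require Import structures.
From mathcomp Require Import all_boot all_algebra.
From mathcomp Require Import finmap.
Set Implicit Arguments. Unset Strict Implicit. Unset Printing Implicit Defensive.
Local Open Scope ring_scope.
Local Open Scope fset_scope.

(* One shows that phi(X) <= psi(X) holds on A and on the intersections of its members,
   by induction along the generation process.  For an intersection X of H_i, take
   Z := psi^-1 (meet of the psi(H_i)); monotonicity of psi^-1 gives Z <= X, hence
   phi(X) <= meet of the phi(H_i) <= psi(Z) <= psi(X).  For a sum H of such X,
   phi(H) = sum of the phi(X) <= sum of the psi(X) <= psi(H).  On a hyperplane H the
   inclusion is an equality, since psi(H) is proper and phi(H) is a hyperplane.  So
   psi = phi on A, and psi(A) = B because every G in B is psi of a proper flat Z, which
   lies in some H in A, so that the hyperplane G is contained in, hence equal to, psi(H). *)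

Section Subspaces.
Variables (K : fieldType) (V : vectType K).
Implicit Types (U W H : {vspace V}) (l : seq {vspace V}).

Lemma bigcapv_seq_inf (F : {vspace V} -> {vspace V}) l H :
  H \in l -> (\bigcap_(X <- l) F X <= F H)%VS.
Proof. by move=> Hl; rewrite (big_rem H Hl) capvSl. Qed.

Lemma subv_bigcapv_seq (F : {vspace V} -> {vspace V}) l U :
  (forall H, H \in l -> U <= F H)%VS -> (U <= \bigcap_(X <- l) F X)%VS.
Proof.
move=> sUl; rewrite big_seq.
by elim/big_rec: _ => [|H W Hl sUW]; rewrite ?subvf // subv_cap sUl.
Qed.

Lemma sumv_seq_sup (F : {vspace V} -> {vspace V}) l H :
  H \in l -> (F H <= \sum_(X <- l) F X)%VS.
Proof. by move=> Hl; rewrite (big_rem H Hl) addvSl. Qed.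

Lemma subv_sumv_seq (F : {vspace V} -> {vspace V}) l U :
  (forall X, X \in l -> F X <= U)%VS -> (\sum_(X <- l) F X <= U)%VS.
Proof.
move=> sFU; rewrite big_seq.
by elim/big_rec: _ => [|X W Xl sWU]; rewrite ?sub0v // subv_add sFU.
Qed.

Lemma hyperplane_maximal U W :
  is_hyperplane U -> (U <= W)%VS -> W != fullv -> U = W.
Proof.
rewrite /is_hyperplane => dimU sUW neWf; apply/eqP; rewrite eqEdim sUW -ltnS dimU.
rewrite ltn_neqAle dimvS ?subvf // andbT; apply: contra neWf => /eqP dimW.
by rewrite eqEdim subvf dimW leqnn.
Qed.

Lemma hyperplane_neq_fullv H : is_hyperplane H -> H != fullv.
Proof. by rewrite /is_hyperplane; apply: contraPneq => -> /esym /n_Sn. Qed.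

Lemma LA_fullv (C : {fset {vspace V}}) : LA C fullv.
Proof. by exists [::]; rewrite big_nil. Qed.

Lemma LA_mem (C : {fset {vspace V}}) H : H \in C -> LA C H.
Proof. by exists [:: H]; rewrite big_seq1; split=> // G; rewrite inE => /eqP->. Qed.

Lemma LA_proper_sub (C : {fset {vspace V}}) U :
  LA C U -> U != fullv -> exists2 H, H \in C & (U <= H)%VS.
Proof.
move=> [[|H l] [lC ->]]; first by rewrite big_nil eqxx.
by move=> _; exists H; [apply: lC | apply: (bigcapv_seq_inf id)]; rewrite mem_head.
Qed.

Lemma LA_hyperplane_mem (C : {fset {vspace V}}) U :
  is_arrangement C -> LA C U -> is_hyperplane U -> U \in C.
Proof.
move=> hC LU hypU; have [H HC sUH] := LA_proper_sub LU (hyperplane_neq_fullv hypU).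
by rewrite (hyperplane_maximal hypU sUH (hyperplane_neq_fullv (hC _ HC))).
Qed.

End Subspaces.

Section LatticeIso.
Variables (K : fieldType) (V : vectType K) (A B : {fset {vspace V}}).
Variable psi : {vspace V} -> {vspace V}.
Hypothesis hpsi : lattice_iso A B psi.

Lemma lattice_iso_LA X : LA A X -> LA B (psi X).
Proof. by case: hpsi => LAB _ _ _; apply: LAB. Qed.

Lemma lattice_iso_surj Y : LA B Y -> exists2 X, LA A X & psi X = Y.
Proof. by case: hpsi => _ sur _ _; apply: sur. Qed.

Lemma lattice_iso_subv X Y : LA A X -> LA A Y -> (psi Y <= psi X)%VS = (Y <= X)%VS.
Proof. by case: hpsi => _ _ mono _; apply: mono. Qed.

Lemma lattice_iso_fullv : psi fullv = fullv.
Proof.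
have [Z LZ eZ] := lattice_iso_surj (LA_fullv B).
apply/eqP; rewrite eqEsubv subvf -{1}eZ lattice_iso_subv ?subvf //; exact: LA_fullv.
Qed.

Lemma lattice_iso_neq_fullv X : LA A X -> X != fullv -> psi X != fullv.
Proof.
case: hpsi => _ _ _ inj LX; apply: contra_neq => psiXf.
by apply: inj LX (LA_fullv A) _; rewrite psiXf lattice_iso_fullv.
Qed.

End LatticeIso.

Section Transfer.
Variables (K : fieldType) (V : vectType K) (A B : {fset {vspace V}}).
Variables (psi : {vspace V} -> {vspace V}) (phi : 'End(V)).
Hypotheses (hA : is_arrangement A) (hB : is_arrangement B).
Hypotheses (hpsi : lattice_iso A B psi) (hker : lker phi = 0%VS).

Lemma is_hyperplane_limg H : is_hyperplane H -> is_hyperplane (phi @: H).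
Proof. by rewrite /is_hyperplane limg_dim_eq // hker capv0. Qed.

Lemma hyperplane_img_eq H : H \in A -> (phi @: H <= psi H)%VS -> psi H = (phi @: H)%VS.
Proof.
move=> HA sH; apply/esym/(hyperplane_maximal (is_hyperplane_limg (hA HA)) sH).
by apply: (lattice_iso_neq_fullv hpsi (LA_mem HA)); apply/hyperplane_neq_fullv/hA.
Qed.

Lemma hyperplane_img_mem H : H \in A -> (phi @: H <= psi H)%VS -> psi H \in B.
Proof.
move=> HA sH; apply: LA_hyperplane_mem hB (lattice_iso_LA hpsi (LA_mem HA)) _.
by rewrite hyperplane_img_eq //; apply/is_hyperplane_limg/hA.
Qed.

Lemma bigcap_img_sub (l : seq {vspace V}) :
    (forall H, H \in l -> H \in A /\ (phi @: H <= psi H)%VS) ->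
  (phi @: (\bigcap_(H <- l) H) <= psi (\bigcap_(H <- l) H))%VS.
Proof.
move=> hl; set X := (\bigcap_(H <- l) H)%VS.
have LX : LA A X by exists l; split=> // H /hl[].
have LY : LA B (\bigcap_(H <- l) psi H).
  exists (map psi l); rewrite big_map; split=> // _ /mapP[H Hl ->].
  by have [HA sH] := hl _ Hl; apply: hyperplane_img_mem.
have [Z LZ eZ] := lattice_iso_surj hpsi LY.
have sZX : (Z <= X)%VS.
  apply: subv_bigcapv_seq => H Hl; have [HA _] := hl _ Hl.
  by rewrite -(lattice_iso_subv hpsi (LA_mem HA) LZ) eZ bigcapv_seq_inf.
apply: subv_trans (_ : phi @: X <= psi Z)%VS _; last by rewrite (lattice_iso_subv hpsi).
rewrite eZ; apply: subv_bigcapv_seq => H Hl; have [_ sH] := hl _ Hl.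
exact: subv_trans (limgS _ (bigcapv_seq_inf id Hl)) sH.
Qed.

Lemma lattice_iso_mem_img G : {in A, forall H, psi H = (phi @: H)%VS} ->
  G \in B -> exists2 H, H \in A & G = (phi @: H)%VS.
Proof.
move=> psiE GB; have [Z LZ eZ] := lattice_iso_surj hpsi (LA_mem GB).
have [H HA sZH] : exists2 H, H \in A & (Z <= H)%VS.
  apply: LA_proper_sub LZ _; apply: contra_neq (hyperplane_neq_fullv (hB GB)).
  by move=> Zf; rewrite -eZ Zf (lattice_iso_fullv hpsi).
exists H => //; apply: hyperplane_maximal (hB GB) _ _; rewrite -psiE //.
  by rewrite -eZ (lattice_iso_subv hpsi (LA_mem HA) LZ).
by apply: (lattice_iso_neq_fullv hpsi (LA_mem HA)); apply/hyperplane_neq_fullv/hA.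
Qed.

Variable S : {fset {vspace V}}.
Hypotheses (SA : S `<=` A) (psiS : forall H, H \in S -> psi H = (phi @: H)%VS).

Lemma Gen_img_sub i H : Gen A S i H -> H \in A /\ (phi @: H <= psi H)%VS.
Proof.
elim: i H => [|i IH] H /=.
  by move=> HS; rewrite (fsubsetP SA) // psiS.
move=> [HA [J [LJ eH]]]; split=> //; rewrite {1}eH limg_sum.
apply: subv_sumv_seq => X XJ; have [l [lGen eX]] := LJ _ XJ.
have LX : LA A X by exists l; split=> // G /lGen /IH [].
apply: subv_trans (_ : psi X <= _)%VS.
  by rewrite eX; apply: bigcap_img_sub => G /lGen /IH.
by rewrite (lattice_iso_subv hpsi (LA_mem HA) LX) eH; apply: (sumv_seq_sup id).
Qed.

Lemma generated_img_eq : generates A S -> {in A, forall H, psi H = (phi @: H)%VS}.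
Proof.
move=> gA H HA; have [i /Gen_img_sub [_ sH]] := (gA H).2 HA.
exact: hyperplane_img_eq.
Qed.

End Transfer.

Theorem mainTheorem2 (K : fieldType) (V : vectType K)
    (A B S T : {fset {vspace V}})
    (psi : {vspace V} -> {vspace V}) (phi : 'End(V)) :
  is_arrangement A -> is_arrangement B ->
  S != fset0 -> S `<=` A -> T != fset0 -> T `<=` B ->
  generates A S -> generates B T ->
  lattice_iso A B psi ->
  lker phi = 0%VS ->
  [fset psi H | H in S] = T ->
  [fset (phi @: H)%VS | H in S] = T ->
  (forall H, H \in S -> psi H = (phi @: H)%VS) ->
  [fset (phi @: H)%VS | H in A] = B.
Proof.
move=> hA hB _ SA _ _ gA _ hpsi hker _ _ psiS.
(* Only the agreement of psi and phi on S matters. *)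
have psiE := generated_img_eq hA hB hpsi hker SA psiS gA.
apply/fsetP => G; apply/imfsetP/idP => [[H /= HA ->] | GB].
  by rewrite -psiE // (hyperplane_img_mem hA hB hpsi hker) ?psiE.
by have [H HA ->] := lattice_iso_mem_img hA hB hpsi psiE GB; exists H.
Qed.
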